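(* Let $d,n\ge 1$, let $\eta\in\mathbb{R}$, and let $S=\{(\mathbf{x}^S_i,y^S_i)\}_{i=1}^{|S|}$ and $T=\{(\mathbf{x}^T_j,y^T_j)\}_{j=1}^{|T|}$ be datasets with $\mathbf{x}\in\mathbb{R}^d$, $y\in\mathbb{R}$, where $n=|S|$. For a dataset $D$ and weights $\mathbf{w}\in\mathbb{R}^{|D|}$ define the loss $\mathcal{L}(\boldsymbol{\theta};D,\mathbf{w})=\sum_{i=1}^{|D|}w_i(\langle\mathbf{x}^D_i,\boldsymbol{\theta}\rangle-y^D_i)^2$ for $\boldsymbol{\theta}\in\mathbb{R}^d$. Let $\mathbf{g}_T(\boldsymbol{\theta})=\nabla_{\boldsymbol{\theta}}\mathcal{L}(\boldsymbol{\theta};T,\mathbb{1})$, $\mathbf{H}_T=\nabla^2_{\boldsymbol{\theta}}\mathcal{L}(\boldsymbol{\theta};T,\mathbb{1})$, $\mathbf{g}_{\mathbf{w}}(\boldsymbol{\theta})=\nabla_{\boldsymbol{\theta}}\mathcal{L}(\boldsymbol{\theta};S,\mathbf{w})$ and $\mathbf{H}_{\mathbf{w}}=\nabla^2_{\boldsymbol{\theta}}\mathcal{L}(\boldsymbol{\theta};S,\mathbf{w})$ (the Hessians do not depend on $\boldsymbol{\theta}$). Let $\mathbf{G}_S(\boldsymbol{\theta})\in\mathbb{R}^{n\times d}$ be the matrix whose $i$-th row is $\nabla_{\boldsymbol{\theta}}(\langle\mathbf{x}^S_i,\boldsymbol{\theta}\rangle-y^S_i)^2$, and define $\mathbf{p}(\boldsymbol{\theta})=\mathbf{G}_S(\boldsymbol{\theta})\mathbf{g}_T(\boldsymbol{\theta})$,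 $\mathbf{Q}(\boldsymbol{\theta})=\mathbf{G}_S(\boldsymbol{\theta})\mathbf{H}_T\mathbf{G}_S(\boldsymbol{\theta})^T$ and $f(\mathbf{w};\boldsymbol{\theta})=-\mathbf{p}(\boldsymbol{\theta})^T\mathbf{w}+\frac{\eta}{2}\mathbf{w}^T\mathbf{Q}(\boldsymbol{\theta})\mathbf{w}$. Define $\mathbf{a}_{\mathbf{w}}=-\mathbf{H}_{\mathbf{w}}\mathbf{g}_T(\boldsymbol{\theta})-\mathbf{H}_T\mathbf{g}_{\mathbf{w}}(\boldsymbol{\theta})+\eta\mathbf{H}_{\mathbf{w}}\mathbf{H}_T\mathbf{g}_{\mathbf{w}}(\boldsymbol{\theta})$ and $\mathbf{B}_{\mathbf{w}}=-\mathbf{H}_T\mathbf{H}_{\mathbf{w}}+\frac{\eta}{2}\mathbf{H}_{\mathbf{w}}\mathbf{H}_T\mathbf{H}_{\mathbf{w}}$. Then for all $\boldsymbol{\theta},\boldsymbol{\delta}\in\mathbb{R}^d$ and $\mathbf{w}\in\mathbb{R}^n$, $f(\mathbf{w};\boldsymbol{\theta}+\boldsymbol{\delta})=f(\mathbf{w};\boldsymbol{\theta})+\mathbf{a}_{\mathbf{w}}^T\boldsymbol{\delta}+\boldsymbol{\delta}^T\mathbf{B}_{\mathbf{w}}\boldsymbol{\delta}$.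
   Context: $\mathbb{1}$ denotes the all-ones vector of the appropriate length. The quantities $\mathbf{g}_{\mathbf{w}}$, $\mathbf{a}_{\mathbf{w}}$, $\mathbf{B}_{\mathbf{w}}$ are evaluated at the base point $\boldsymbol{\theta}$. *)

From HB Require Import structures.
From mathcomp Require Import all_boot all_order all_algebra.
From mathcomp Require Import all_classical all_reals all_analysis.
Set Implicit Arguments. Unset Strict Implicit. Unset Printing Implicit Defensive.
Import Order.TTheory GRing.Theory Num.Theory.
Import numFieldNormedType.Exports.
Local Open Scope ring_scope.

Section Defs.
Variable R : realType.

Definition dotv (d : nat) (u v : 'cV[R]_d) : R := \sum_(k < d) u k ord0 * v k ord0.

Definition evec (d : nat) (j : 'I_d) : 'cV[R]_d := delta_mx j ord0.

Definition grad (d : nat) (f : 'cV[R]_d -> R) (th : 'cV[R]_d) : 'cV[R]_d :=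
  \col_(j < d) ('D_(evec j) f th).

Definition hess (d : nat) (f : 'cV[R]_d -> R) (th : 'cV[R]_d) : 'M[R]_d :=
  \matrix_(i < d, j < d) ('D_(evec j) (fun t => 'D_(evec i) f t) th).

Definition loss (d m : nat) (x : 'I_m -> 'cV[R]_d) (y : 'I_m -> R)
  (w : 'cV[R]_m) (th : 'cV[R]_d) : R :=
  \sum_(i < m) w i ord0 * (dotv (x i) th - y i) ^+ 2.

Definition ones (m : nat) : 'cV[R]_m := const_mx 1.

Definition GS (d n : nat) (xS : 'I_n -> 'cV[R]_d) (yS : 'I_n -> R)
  (th : 'cV[R]_d) : 'M[R]_(n, d) :=
  \matrix_(i < n, j < d) grad (fun t => (dotv (xS i) t - yS i) ^+ 2) th j ord0.

Definition fobj (d n m : nat) (xS : 'I_n -> 'cV[R]_d) (yS : 'I_n -> R)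
  (xT : 'I_m -> 'cV[R]_d) (yT : 'I_m -> R) (eta : R)
  (w : 'cV[R]_n) (th : 'cV[R]_d) : R :=
  let gT := grad (loss xT yT (ones m)) th in
  let HT := hess (loss xT yT (ones m)) th in
  let G := GS xS yS th in
  let p := G *m gT in
  let Q := G *m HT *m G^T in
  - (p^T *m w) ord0 ord0 + eta / 2 * (w^T *m Q *m w) ord0 ord0.

End Defs.

From HB Require Import structures.
From mathcomp Require Import all_boot all_order all_algebra.
From mathcomp Require Import all_classical all_reals all_analysis.
From mathcomp Require Import ring.

(* All losses are quadratic in theta: their gradients are affine,
   g(theta + delta) = g(theta) + H delta, with constant symmetric Hessians H,
   and G_S(theta)^T w = g_w(theta).  Hence
   f(w; theta) = - g_T^T g_w + eta/2 g_w^T H_T g_w, and substituting the two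
   affine shifts and expanding this form gives a_w and B_w, using the symmetry
   of H_T and H_w to transpose the scalar cross terms. *)
Import Order.TTheory GRing.Theory Num.Theory.
Import numFieldNormedType.Exports.
Set Implicit Arguments. Unset Strict Implicit.
Local Open Scope ring_scope.

Lemma derive_quadratic_along (R : numFieldType) (V : normedModType R)
    (f : V -> R) (x v : V) (b c : R) :
  (forall h : R, f (x + h *: v) = f x + b * h + c * h ^+ 2) -> 'D_v f x = b.
Proof.
move=> f_quad; rewrite /derive; apply: cvg_lim => //.
apply: (@cvg_trans _ ((fun h : R => b + c * h) @ 0^')%classic).
  apply: near_eq_cvg; near=> h.
  have h_neq0 : h != 0 by near: h; exact: nbhs_dnbhs_neq.
  rewrite /= [h *: v + x]addrC f_quad.
  rewrite [X in _ *: X](_ : _ = h * (b + c * h)); last by ring.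
  by rewrite [_ *: _]mulrA mulVf // mul1r.
apply: cvg_within_filter.
have lim_affine : ((fun h : R => b + c * h) @ nbhs (0 : R) --> b + c * 0)%classic.
  by apply: cvgD; [exact: cvg_cst | apply: cvgM; [exact: cvg_cst | exact: cvg_id]].
by rewrite mulr0 addr0 in lim_affine.
Unshelve. all: by end_near.
Qed.

Lemma trmx11 (R : nmodType) (M : 'M[R]_1) : M^T = M.
Proof. by rewrite [M]mx11_scalar tr_scalar_mx. Qed.

Section QuadraticShift.
Variables (R : numFieldType) (d : nat) (eta : R) (H : 'M[R]_d).

Definition fobj_grads (g u : 'cV[R]_d) : R :=
  - (g^T *m u) 0 0 + eta / 2 * (u^T *m H *m u) 0 0.

Lemma fobj_grads_shift (K : 'M[R]_d) (g u delta : 'cV[R]_d) :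
  H^T = H -> K^T = K ->
  fobj_grads (g + H *m delta) (u + K *m delta) =
    fobj_grads g u
    + ((- (K *m g) - H *m u + eta *: (K *m H *m u))^T *m delta) 0 0
    + (delta^T *m (- (H *m K) + (eta / 2) *: (K *m H *m K)) *m delta) 0 0.
Proof.
move=> H_sym K_sym.
have dHu : delta^T *m H *m u = u^T *m H *m delta.
  by rewrite -[LHS]trmx11 !trmx_mul trmxK H_sym mulmxA.
have dKHu : delta^T *m K *m H *m u = u^T *m H *m K *m delta.
  by rewrite -[LHS]trmx11 !trmx_mul trmxK H_sym K_sym !mulmxA.
rewrite /fobj_grads !linearD /= !linearN /= linearZ /= !trmx_mul H_sym K_sym.
rewrite !(mulmxDl, mulmxDr, mulmxN, mulNmx) -!scalemxAr !mulmxA -!scalemxAl.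
rewrite dHu dKHu.
move: (g^T *m u) (g^T *m K *m delta) (u^T *m H *m u) (u^T *m H *m delta)
  (u^T *m H *m K *m delta) (delta^T *m H *m K *m delta)
  (delta^T *m K *m H *m K *m delta) => gu gKd uHu uHd uHKd dHKd dKHKd.
by rewrite !mxE; field.
Qed.

End QuadraticShift.

Section SquaredLoss.
Variables (R : realType) (d : nat).
Implicit Types (t v delta : 'cV[R]_d) (h : R).

Lemma dotvE (u v : 'cV[R]_d) : dotv u v = (u^T *m v) 0 0.
Proof. by rewrite /dotv !mxE; apply: eq_bigr => k _; rewrite mxE. Qed.

Lemma dotvDr (a : 'cV[R]_d) t v : dotv a (t + v) = dotv a t + dotv a v.
Proof. by rewrite !dotvE mulmxDr mxE. Qed.

Lemma dotvZr (a : 'cV[R]_d) h v : dotv a (h *: v) = h * dotv a v.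
Proof. by rewrite !dotvE -scalemxAr mxE. Qed.

Lemma dotv_evec (a : 'cV[R]_d) j : dotv a (evec R j) = a j 0.
Proof. by rewrite dotvE /evec -colE !mxE. Qed.

Lemma derive_sq_residual (a : 'cV[R]_d) (b : R) t j :
  'D_(evec R j) (fun s => (dotv a s - b) ^+ 2) t = 2 * (dotv a t - b) * a j 0.
Proof.
apply: (derive_quadratic_along (c := a j 0 ^+ 2)) => h.
by rewrite dotvDr dotvZr dotv_evec; ring.
Qed.

Variables (m : nat) (x : 'I_m -> 'cV[R]_d) (y : 'I_m -> R) (w : 'cV[R]_m).

Definition loss_grad t : 'cV[R]_d :=
  \sum_(k < m) (2 * w k 0 * (dotv (x k) t - y k)) *: x k.

Definition loss_hess : 'M[R]_d := \sum_(k < m) (2 * w k 0) *: (x k *m (x k)^T).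

Lemma loss_hess_sym : loss_hess^T = loss_hess.
Proof.
by rewrite linear_sum; apply: eq_bigr => k _; rewrite linearZ /= trmx_mul trmxK.
Qed.

Lemma loss_grad_shift t delta :
  loss_grad (t + delta) = loss_grad t + loss_hess *m delta.
Proof.
rewrite /loss_grad /loss_hess mulmx_suml -big_split /=; apply: eq_bigr => k _.
rewrite -scalemxAl -mulmxA [_ *m delta]mx11_scalar mul_mx_scalar scalerA -dotvE.
by rewrite -scalerDl dotvDr; congr (_ *: _); ring.
Qed.

Lemma grad_loss t : grad (loss x y w) t = loss_grad t.
Proof.
apply/matrixP => i j; rewrite ord1 !mxE summxE.
apply: (derive_quadratic_along (c := \sum_(k < m) w k 0 * x k i 0 ^+ 2)) => h.
rewrite /loss mulr_suml mulr_suml -!big_split /=; apply: eq_bigr => k _.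
by rewrite !mxE dotvDr dotvZr dotv_evec; ring.
Qed.

Lemma hess_loss t : hess (loss x y w) t = loss_hess.
Proof.
apply/matrixP => i j; rewrite mxE.
have -> : (fun s => 'D_(evec R i) (loss x y w) s) = (fun s => loss_grad s i 0).
  by apply: funext => s; rewrite -grad_loss mxE.
apply: (derive_quadratic_along (c := 0)) => h.
by rewrite loss_grad_shift -scalemxAr /evec -colE !mxE; ring.
Qed.

Lemma GS_trmx_mul t : (GS x y t)^T *m w = loss_grad t.
Proof.
apply/matrixP => j z; rewrite ord1 !mxE summxE; apply: eq_bigr => k _.
by rewrite !mxE derive_sq_residual; ring.
Qed.

End SquaredLoss.

Lemma fobjE (R : realType) (d n m : nat) (eta : R)
    (xS : 'I_n -> 'cV[R]_d) (yS : 'I_n -> R)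
    (xT : 'I_m -> 'cV[R]_d) (yT : 'I_m -> R) (w : 'cV[R]_n) (th : 'cV[R]_d) :
  fobj xS yS xT yT eta w th =
    fobj_grads eta (loss_hess xT (ones R m))
      (loss_grad xT yT (ones R m) th) (loss_grad xS yS w th).
Proof.
rewrite /fobj /fobj_grads /= grad_loss hess_loss -[loss_grad xS _ _ _]GS_trmx_mul.
by rewrite !trmx_mul trmxK !mulmxA.
Qed.

Theorem lemma1 (R : realType) (d n m : nat) (hd : (0 < d)%N) (hn : (0 < n)%N)
  (eta : R) (xS : 'I_n -> 'cV[R]_d) (yS : 'I_n -> R)
  (xT : 'I_m -> 'cV[R]_d) (yT : 'I_m -> R)
  (th delta : 'cV[R]_d) (w : 'cV[R]_n) :
  let gT := grad (loss xT yT (ones R m)) th in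
  let HT := hess (loss xT yT (ones R m)) th in
  let gw := grad (loss xS yS w) th in
  let Hw := hess (loss xS yS w) th in
  let aw := - (Hw *m gT) - HT *m gw + eta *: (Hw *m HT *m gw) in
  let Bw := - (HT *m Hw) + (eta / 2) *: (Hw *m HT *m Hw) in
  fobj xS yS xT yT eta w (th + delta) =
    fobj xS yS xT yT eta w th + (aw^T *m delta) ord0 ord0
    + (delta^T *m Bw *m delta) ord0 ord0.
Proof.
move=> gT HT gw Hw aw Bw.
rewrite /aw /Bw /gT /HT /gw /Hw !grad_loss !hess_loss !fobjE !loss_grad_shift.
by apply: fobj_grads_shift; exact: loss_hess_sym.
Qed.
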